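(* Under the standing assumptions, suppose $\lambda_i(\pi)\neq 0$ for some $i\in I$. Define $\pi'\in\mathbb{R}^n$ by $\pi'_j=\pi_j$ for $j\neq i$ and $\pi'_i=\pi_i+\lambda_i(\pi)$, and define $\pi'_0=\pi_0$ if $i\in S^{+}(\pi)$ and $\pi'_0=\pi_0+\lambda_i(\pi)$ otherwise. Then: (1) $\pi'^\top x\le\pi'_0$ holds for all $x\in X$; (2) $F(\pi,\pi_0)\subset F(\pi',\pi'_0)$ and $\dim F(\pi',\pi'_0)\ge \dim F(\pi,\pi_0)+1$; (3) for every $\bar x\in[0,1]^n$ with $\pi^\top\bar x>\pi_0$ we have $\pi'^\top\bar x>\pi'_0$.
   Context: Let $n\ge 1$, $I=\{1,\dots,n\}$ and $X\subseteq\{0,1\}^n$. Standing assumptions: (a) the inequality $\pi^\top x\le \pi_0$ is valid for $X$ and supports $\mathrm{conv}(X)$, i.e. $\pi_0=\max_{x\in X}\pi^\top x$; (b) for every $i\in I$ there exist $x,x'\in X$ with $x_i=0$ and $x'_i=1$. For any $(\sigma,\sigma_0)$, the face is $F(\sigma,\sigma_0):=\{x\in\mathrm{conv}(X):\sigma^\top x=\sigma_0\}$. The disjunctive slack vector $\lambda(\pi)\in\mathbb{R}^n$ is defined by $\lambda^0_i(\pi):=\max_{x\in X}\{\pi^\top x: x_i=0\}$, $\lambda^1_i(\pi):=\max_{x\in X}\{\pi^\top x:x_i=1\}$ and $\lambda_i(\pi):=\lambda^0_i(\pi)-\lambda^1_i(\pi)$ for $i\in I$. Let $S^{-}(\pi)=\{i\in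 I:\lambda_i(\pi)<0\}$, $S^{0}(\pi)=\{i\in I:\lambda_i(\pi)=0\}$, $S^{+}(\pi)=\{i\in I:\lambda_i(\pi)>0\}$. *)

From HB Require Import structures.
From mathcomp Require Import all_boot all_order all_algebra.
From Stdlib Require Import ClassicalEpsilon.
Set Implicit Arguments. Unset Strict Implicit. Unset Printing Implicit Defensive.
Import Order.TTheory GRing.Theory Num.Theory.
Local Open Scope ring_scope.

Section Defs.
Variables (R : realFieldType) (n : nat).

Definition bpt := {ffun 'I_n -> bool}.
Definition vec (x : bpt) : 'rV[R]_n := \row_j ((x j : nat)%:R).

Definition dot (a b : 'rV[R]_n) : R := \sum_(j < n) a 0 j * b 0 j.

(* maximum of F over a nonempty finite set A (0 if A is empty) *)
Definition setmax {T : finType} (A : {set T}) (F : T -> R) : R :=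
  match [pick x in A] with
  | Some x0 => \big[Num.max/F x0]_(x in A) F x
  | None => 0
  end.

Definition lambda0 (X : {set bpt}) (pi : 'rV[R]_n) (i : 'I_n) : R :=
  setmax [set x in X | x i == false] (fun x => dot pi (vec x)).
Definition lambda1 (X : {set bpt}) (pi : 'rV[R]_n) (i : 'I_n) : R :=
  setmax [set x in X | x i == true] (fun x => dot pi (vec x)).
Definition lambda (X : {set bpt}) (pi : 'rV[R]_n) (i : 'I_n) : R :=
  lambda0 X pi i - lambda1 X pi i.

Definition conv (X : {set bpt}) (y : 'rV[R]_n) : Prop :=
  exists w : bpt -> R, (forall x, x \in X -> 0 <= w x) /\
    \sum_(x in X) w x = 1 /\ y = \sum_(x in X) w x *: vec x.

Definition face (X : {set bpt}) (sigma : 'rV[R]_n) (sigma0 : R)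
  (y : 'rV[R]_n) : Prop := conv X y /\ dot sigma y = sigma0.

Definition has_aff_indep (S : 'rV[R]_n -> Prop) (k : nat) : Prop :=
  exists p : 'I_k.+1 -> 'rV[R]_n, (forall i, S (p i)) /\
    row_free (\matrix_(i < k) (p (lift ord0 i) - p ord0)).

Definition pb (P : Prop) : bool := if excluded_middle_informative P then true else false.

Definition affdim (S : 'rV[R]_n -> Prop) : int :=
  if pb (exists y, S y) then
    Posz (\max_(k < n.+1 | pb (has_aff_indep S k)) (k : nat))
  else -1.

End Defs.

From HB Require Import structures.
From mathcomp Require Import all_boot all_order all_algebra.
From mathcomp Require Import lra.
From Stdlib Require Import ClassicalEpsilon.
Set Implicit Arguments. Unset Strict Implicit. Unset Printing Implicit Defensive.
Import Order.TTheory GRing.Theory Num.Theory.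
Local Open Scope ring_scope.

(* Since pi0 = max(lambda0, lambda1), the tilted inequality pi' x <= lambda0 is
   valid on both halves {x_i = 0} and {x_i = 1} of X and tight at the maximisers
   of pi on each half; hence pi0' = lambda0 and every maximiser of pi over X stays
   tight. When lambda_i <> 0 only one half contains maximisers of pi over X, so
   F(pi, pi0) lies in a hyperplane y_i = const, whereas F(pi', pi0') also contains
   a maximiser of the other half: the dimension grows. Finally, for xb in [0,1]^n,
   pi' xb - lambda0 is the convex combination with weight xb_i of pi xb - lambda0
   and pi xb - lambda1, both positive when xb is cut off by pi. *)

Lemma setmax_ub (R : realFieldType) (T : finType) (A : {set T}) (F : T -> R) x :
  x \in A -> F x <= setmax A F.
Proof.
move=> Ax; rewrite /setmax; case: pickP => [x0 _|A0]; last by rewrite A0 in Ax.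
by rewrite (bigD1 x) //= le_max lexx.
Qed.

Lemma setmax_attained (R : realFieldType) (T : finType) (A : {set T}) (F : T -> R) x :
  x \in A -> exists2 y, y \in A & F y = setmax A F.
Proof.
move=> Ax; rewrite /setmax; case: pickP => [x0 Ax0|A0]; last by rewrite A0 in Ax.
apply: (big_ind (fun v => exists2 y, y \in A & F y = v)); first by exists x0.
  move=> a b [ya Aya <-] [yb Ayb <-].
  by case: (leP (F ya) (F yb)); [exists yb|exists ya].
by move=> y Ay; exists y.
Qed.

Lemma pbT (P : Prop) : P -> pb P.
Proof. by rewrite /pb; case: excluded_middle_informative. Qed.

Lemma pbP (P : Prop) : pb P -> P.
Proof. by rewrite /pb; case: excluded_middle_informative. Qed.

Section AffineDimension.
Variables (R : realFieldType) (n : nat).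
Implicit Types (S : 'rV[R]_n -> Prop) (k : nat).

Lemma row_free_col_mx_coord k (u : 'rV[R]_n) (A : 'M[R]_(k, n)) (i : 'I_n) :
  row_free A -> (forall j, A j i = 0) -> u 0 i != 0 -> row_free (col_mx u A).
Proof.
move=> freeA Ai0 ui0; apply: inj_row_free => v.
rewrite -[v]hsubmxK mul_row_col => vA0.
have vl0 : lsubmx v = 0.
  move/matrixP: vA0 => /(_ 0 i); rewrite !mxE !big_ord1 big1 => [|j _]; last first.
    by rewrite Ai0 mulr0.
  rewrite addr0 mxE => /eqP; rewrite mulf_eq0 (negbTE ui0) orbF => /eqP v0.
  by apply/rowP => j; rewrite (ord1 j) !mxE v0.
move: vA0; rewrite vl0 mul0mx add0r -(mul0mx _ A) => /(row_free_inj freeA) vr0.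
by rewrite vr0 row_mx0.
Qed.

Lemma has_aff_indep0 S y : S y -> has_aff_indep S 0.
Proof.
by move=> Sy; exists (fun=> y); split=> //; apply: inj_row_free => v _; apply: thinmx0.
Qed.

Lemma has_aff_indep_le S k : has_aff_indep S k -> (k <= n)%N.
Proof.
by case=> p [_ /eqP free]; rewrite -[X in (X <= _)%N]free rank_leq_col.
Qed.

Lemma affdim_ge S k : has_aff_indep S k -> k%:Z <= affdim S.
Proof.
move=> indS; have [p [Sp _]] := indS.
rewrite /affdim pbT; last by exists (p ord0).
have kn : (k < n.+1)%N by rewrite ltnS (has_aff_indep_le indS).
by rewrite lez_nat (@leq_bigmax_cond _ _ _ (Ordinal kn)) //; apply: pbT.
Qed.

Lemma affdim_attained S : (exists y, S y) ->
  exists k, has_aff_indep S k /\ affdim S = k%:Z.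
Proof.
move=> [y Sy]; rewrite /affdim pbT; last by exists y.
have ind0 : pb (has_aff_indep S (@ord0 n)) by apply/pbT/(has_aff_indep0 Sy).
rewrite (bigop.bigmax_eq_arg _ ind0).
by case: arg_maxnP => // k /pbP indk _; exists k.
Qed.

(* Put z second: the difference matrix of the new family is [z - p 0] stacked on
   the old one, and only its first row has a nonzero i-th entry. *)
Lemma has_aff_indep_extend S S' (i : 'I_n) c z k :
  (forall y, S y -> S' y) -> (forall y, S y -> y 0 i = c) ->
  S' z -> z 0 i != c -> has_aff_indep S k -> has_aff_indep S' k.+1.
Proof.
move=> SS' Sc S'z zc [p [Sp free]].
pose q (j : 'I_k.+2) := if unlift ord0 j is Some j' then
  (if unlift ord0 j' is Some j'' then p (lift ord0 j'') else z) else p ord0.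
exists q; split.
  move=> j; rewrite /q; case: (unlift ord0 j) => [j'|]; last exact/SS'/Sp.
  by case: (unlift ord0 j') => [j''|]; [apply/SS'/Sp|].
have -> : \matrix_(j < k.+1) (q (lift ord0 j) - q ord0) =
          col_mx (z - p ord0) (\matrix_(j < k) (p (lift ord0 j) - p ord0)).
  apply/matrixP => j c'; rewrite !mxE /q unlift_none liftK.
  case: splitP => j' Ej; rewrite !mxE.
    have -> : j = ord0 by apply: val_inj; rewrite /= Ej (ord1 j').
    by rewrite unlift_none (ord1 j').
  have -> : j = lift ord0 j' by apply: val_inj; rewrite /= Ej.
  by rewrite liftK.
apply: (row_free_col_mx_coord (i := i) free) => [j|].
  by rewrite !mxE !(Sc _ (Sp _)) subrr.
by rewrite !mxE (Sc _ (Sp _)) subr_eq0.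
Qed.

Lemma affdim_extend S S' (i : 'I_n) c z :
  (exists y, S y) -> (forall y, S y -> S' y) -> (forall y, S y -> y 0 i = c) ->
  S' z -> z 0 i != c -> affdim S + 1 <= affdim S'.
Proof.
move=> S0 SS' Sc S'z zc; have [k [indS ->]] := affdim_attained S0.
by rewrite -PoszD addn1; apply/affdim_ge/(has_aff_indep_extend SS' Sc S'z zc).
Qed.

End AffineDimension.

Section Faces.
Variables (R : realFieldType) (n : nat) (X : {set bpt n}).

Lemma dot_delta (y : 'rV[R]_n) i : dot (delta_mx 0 i) y = y 0 i.
Proof.
rewrite /dot (bigD1 i) //= big1 => [|j /negbTE ji]; last by rewrite mxE ji andbF mul0r.
by rewrite mxE !eqxx mul1r addr0.
Qed.

Lemma dot_sum (w : bpt n -> R) (a : 'rV[R]_n) :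
  dot a (\sum_(x in X) w x *: vec R x) = \sum_(x in X) w x * dot a (vec R x).
Proof.
rewrite /dot; under eq_bigr => j _ do rewrite summxE big_distrr /=.
rewrite exchange_big; apply: eq_bigr => x _; rewrite big_distrr.
by apply: eq_bigr => j _; rewrite mxE mulrCA.
Qed.

Lemma conv_vec x : x \in X -> conv X (vec R x).
Proof.
move=> Xx; exists (fun y => (y == x)%:R); split=> [y _|]; first exact: ler0n.
split; rewrite (bigD1 x) //= eqxx ?scale1r big1 ?addr0 // => y /andP[_ /negbTE ->].
  by [].
by rewrite scale0r.
Qed.

(* A point of the face is a convex combination in which only maximisers of
   [pi] carry weight, so any linear form constant on those maximisers is
   constant on the face. *)
Lemma face_dot_const (pi a : 'rV[R]_n) (c : R) y :
  let pi0 := setmax X (fun x => dot pi (vec R x)) in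
  (forall x, x \in X -> dot pi (vec R x) = pi0 -> dot a (vec R x) = c) ->
  face X pi pi0 y -> dot a y = c.
Proof.
move=> pi0 maxc [[w [w_ge0 [w1 ->]]]].
rewrite dot_sum => piy.
have slack0 : forall x, x \in X -> w x * (pi0 - dot pi (vec R x)) = 0.
  apply: psumr_eq0P => [x Xx|].
    by rewrite mulr_ge0 ?w_ge0 // subr_ge0 setmax_ub.
  rewrite (eq_bigr _ (fun x _ => mulrBr _ _ _)) sumrB -big_distrl /= w1 mul1r.
  by rewrite piy subrr.
rewrite dot_sum -[c]mul1r -w1 big_distrl /=; apply: eq_bigr => x Xx.
have /eqP := slack0 x Xx; rewrite mulf_eq0 subr_eq0 => /orP[/eqP->|/eqP pix].
  by rewrite !mul0r.
by rewrite maxc.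
Qed.

End Faces.

Section Lifting.
Variables (R : realFieldType) (n : nat) (X : {set bpt n}) (pi : 'rV[R]_n) (i : 'I_n).

Local Notation pidot x := (dot pi (vec R x)).
Local Notation pi0 := (setmax X (fun x => pidot x)).
Local Notation lam := (lambda X pi i).
Local Notation lam0 := (lambda0 X pi i).
Local Notation lam1 := (lambda1 X pi i).

Definition lifted_pi : 'rV[R]_n :=
  \row_j (if j == i then pi 0 j + lambda X pi i else pi 0 j).

Lemma dot_lifted_pi y : dot lifted_pi y = dot pi y + lam * y 0 i.
Proof.
rewrite /dot (bigD1 i) //= [in RHS](bigD1 i) //= mxE eqxx mulrDl addrAC.
by congr (_ + _ + _); apply: eq_bigr => j /negbTE ji; rewrite mxE ji.
Qed.

Lemma vec_coord (x : bpt n) : vec R x 0 i = (x i)%:R.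
Proof. by rewrite mxE. Qed.

Lemma lambda0_ub x : x \in X -> x i = false -> pidot x <= lam0.
Proof. by move=> Xx xi; apply: setmax_ub; rewrite inE Xx xi. Qed.

Lemma lambda1_ub x : x \in X -> x i = true -> pidot x <= lam1.
Proof. by move=> Xx xi; apply: setmax_ub; rewrite inE Xx xi. Qed.

Hypotheses (X_i0 : exists2 x, x \in X & x i = false)
           (X_i1 : exists2 x, x \in X & x i = true).

Lemma lambda0_attained : exists x, [/\ x \in X, x i = false & pidot x = lam0].
Proof.
have [x Xx xi] := X_i0.
have [|y] := @setmax_attained _ _ [set x in X | x i == false] (fun x => pidot x) x.
  by rewrite inE Xx xi.
by rewrite inE => /andP[Xy /eqP yi] vy; exists y.
Qed.

Lemma lambda1_attained : exists x, [/\ x \in X, x i = true & pidot x = lam1].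
Proof.
have [x Xx xi] := X_i1.
have [|y] := @setmax_attained _ _ [set x in X | x i == true] (fun x => pidot x) x.
  by rewrite inE Xx xi.
by rewrite inE => /andP[Xy /eqP yi] vy; exists y.
Qed.

Lemma setmax_lambda : pi0 = Num.max lam0 lam1.
Proof.
apply/le_anti/andP; split.
  have [x Xx _] := X_i0; have [y Xy <-] := setmax_attained (fun x => pidot x) Xx.
  case yi: (y i); rewrite le_max; first by rewrite lambda1_ub ?orbT.
  by rewrite lambda0_ub.
have [[x0 [Xx0 _ <-]] [x1 [Xx1 _ <-]]] := (lambda0_attained, lambda1_attained).
by rewrite ge_max !setmax_ub.
Qed.

Lemma lifted_rhs : (if 0 < lam then pi0 else pi0 + lam) = lam0.
Proof.
by rewrite setmax_lambda maxEle /lambda; case: leP => ?; case: ltP => ?; lra.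
Qed.

Lemma lifted_valid x : x \in X -> dot lifted_pi (vec R x) <= lam0.
Proof.
move=> Xx; rewrite dot_lifted_pi vec_coord /lambda.
case xi: (x i).
  by have := lambda1_ub Xx xi; rewrite mulr1n; lra.
by have := lambda0_ub Xx xi; rewrite mulr0n; lra.
Qed.

Lemma lifted_tight x : x \in X -> pidot x = pi0 -> dot lifted_pi (vec R x) = lam0.
Proof.
move=> Xx; rewrite dot_lifted_pi vec_coord setmax_lambda /lambda => vx.
have l0x : lam0 <= pidot x by rewrite vx le_max lexx.
have l1x : lam1 <= pidot x by rewrite vx le_max lexx orbT.
case xi: (x i).
  by have := lambda1_ub Xx xi; rewrite mulr1n; lra.
by have := lambda0_ub Xx xi; rewrite mulr0n; lra.
Qed.

Lemma face_sub_lifted y : face X pi pi0 y -> face X lifted_pi lam0 y.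
Proof.
move=> Fy; split; first by case: Fy.
by apply: face_dot_const Fy => x Xx /(lifted_tight Xx).
Qed.

Lemma lifted_face_coord (b : bool) :
  exists y, face X lifted_pi lam0 y /\ y 0 i = b%:R.
Proof.
have [x [Xx xi vx]] : exists x, [/\ x \in X, x i = b & pidot x + lam * b%:R = lam0].
  case: b.
    have [x [Xx xi v1]] := lambda1_attained.
    by exists x; split=> //; rewrite /= mulr1n /lambda v1; lra.
  have [x [Xx xi v0]] := lambda0_attained.
  by exists x; split=> //; rewrite /= mulr0n mulr0 addr0.
exists (vec R x); split; last by rewrite vec_coord xi.
by split; [apply: conv_vec | rewrite dot_lifted_pi vec_coord xi].
Qed.

Lemma lifted_separates (xb : 'rV[R]_n) :
  (forall j, 0 <= xb 0 j <= 1) -> pi0 < dot pi xb -> lam0 < dot lifted_pi xb.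
Proof.
move=> xb01; rewrite dot_lifted_pi setmax_lambda gt_max /lambda => /andP[l0x l1x].
have /andP[t0 t1] := xb01 i; case: (leP lam1 lam0) => ?; nra.
Qed.

Hypothesis lam_neq0 : lam != 0.

Lemma maximizer_coord x : x \in X -> pidot x = pi0 -> x i = (lam < 0).
Proof.
move=> Xx vx; rewrite /lambda subr_lt0.
have [l01|l10|l_eq] := ltgtP lam0 lam1; last first.
  by move: lam_neq0; rewrite /lambda l_eq subrr eqxx.
- case xi: (x i) => //; have := lambda1_ub Xx xi.
  by rewrite vx setmax_lambda (max_idPl (ltW l10)) leNgt l10.
- case xi: (x i) => //; have := lambda0_ub Xx xi.
  by rewrite vx setmax_lambda (max_idPr (ltW l01)) leNgt l01.
Qed.

Lemma face_coord y : face X pi pi0 y -> y 0 i = (lam < 0)%R%:R.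
Proof.
move=> Fy; rewrite -dot_delta; apply: face_dot_const Fy => x Xx vx.
by rewrite dot_delta vec_coord maximizer_coord.
Qed.

Lemma affdim_face_lifted :
  affdim (face X pi pi0) + 1 <= affdim (face X lifted_pi lam0).
Proof.
have [x Xx _] := X_i0.
have [y Xy vy] := setmax_attained (fun x => pidot x) Xx.
have [z [F'z zi]] := lifted_face_coord (~~ (lam < 0)).
apply: (affdim_extend (i := i) (c := (lam < 0)%R%:R) _ face_sub_lifted face_coord F'z).
  by exists (vec R y); split; [apply: conv_vec|].
by rewrite zi; case: (lam < 0); rewrite ?oner_neq0 // eq_sym oner_neq0.
Qed.

End Lifting.

Theorem theorem1 (R : realFieldType) (n : nat) (X : {set bpt n})
    (pi : 'rV[R]_n) (pi0 : R) (i : 'I_n) :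
  (0 < n)%N ->
  pi0 = setmax X (fun x => dot pi (vec R x)) ->
  (forall j : 'I_n, (exists2 x, x \in X & x j = false) /\
                    (exists2 x, x \in X & x j = true)) ->
  lambda X pi i != 0 ->
  let pi' := \row_j (if j == i then pi 0 j + lambda X pi i else pi 0 j) in
  let pi0' := if 0 < lambda X pi i then pi0 else pi0 + lambda X pi i in
  [/\ (forall x, x \in X -> dot pi' (vec R x) <= pi0'),
      (forall y, face X pi pi0 y -> face X pi' pi0' y),
      affdim (face X pi' pi0') >= affdim (face X pi pi0) + 1
    & (forall xb : 'rV[R]_n, (forall j, 0 <= xb 0 j <= 1) ->
         dot pi xb > pi0 -> dot pi' xb > pi0')].
Proof.
move=> _ -> /(_ i)[X_i0 X_i1] lam_neq0 pi' pi0'.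
have -> : pi0' = lambda0 X pi i by exact: lifted_rhs.
split.
- exact: lifted_valid.
- exact: face_sub_lifted.
- exact: affdim_face_lifted.
- exact: lifted_separates.
Qed.
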